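(* Let $p$ be an odd prime and $q$ a positive integer. The complete graph $K_{qp}$ is a Legendre cordial graph modulo $p$ if and only if $q=1$ and $p=3$.
   Context: For an odd prime $p$ and an integer $a$ not divisible by $p$, $(a/p)$ denotes the Legendre symbol: $1$ if $a$ is a quadratic residue mod $p$, $-1$ otherwise. For a simple connected graph $G$ of order $n$, a bijection $f:V(G)\to\{1,\dots,n\}$ is a Legendre cordial labeling modulo $p$ if the induced edge labeling $f_p^*:E(G)\to\{0,1\}$, defined by $f_p^*(uv)=0$ if $p\mid f(u)+f(v)$ or $((f(u)+f(v))/p)=-1$, and $f_p^*(uv)=1$ if $((f(u)+f(v))/p)=1$, satisfies $|e_{f_p^*}(0)-e_{f_p^*}(1)|\le1$, where $e_{f_p^*}(i)$ is the number of edges with label $i$. A graph admitting such a labeling is a Legendre cordial graph modulo $p$. *)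

From mathcomp Require Import all_boot all_algebra.
Import GRing.Theory Num.Theory.
Set Implicit Arguments. Unset Strict Implicit. Unset Printing Implicit Defensive.

Definition qres (p a : nat) : bool :=
  (a %% p != 0) && [exists x : 'I_p, (x * x) %% p == a %% p].

Definition legendre (p a : nat) : int :=
  if qres p a then Posz 1 else Negz 0.

Definition edge_label (p : nat) {n : nat} (f : 'I_n -> nat) (u v : 'I_n) : nat :=
  if (p %| f u + f v) then 0 else if legendre p (f u + f v) == Posz 1 then 1 else 0.

(* a simple graph on vertex set 'I_n: symmetric irreflexive relation;
   each edge {u,v} is counted once as the pair u < v *)
Definition simple_graph n (e : rel 'I_n) : Prop :=
  (forall u v, e u v = e v u) /\ (forall u, ~~ e u u).

Definition n_edges_label n (e : rel 'I_n) (p : nat) (f : 'I_n -> nat) (i : nat) : nat :=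
  #|[set uv : 'I_n * 'I_n | [&& uv.1 < uv.2, e uv.1 uv.2 & edge_label p f uv.1 uv.2 == i]]|.

Definition vertex_labeling n (f : 'I_n -> nat) : Prop :=
  injective f /\ (forall v, 1 <= f v <= n).

Definition legendre_cordial_labeling n (e : rel 'I_n) (p : nat) (f : 'I_n -> nat) : Prop :=
  vertex_labeling f /\
  (`|Posz (n_edges_label e p f 0) - Posz (n_edges_label e p f 1)| <= 1)%R.

Definition legendre_cordial {n} (e : rel 'I_n) (p : nat) : Prop :=
  exists f : 'I_n -> nat, legendre_cordial_labeling e p f.

Definition complete_graph n : rel 'I_n := fun u v => u != v.
Arguments complete_graph n u v : clear implicits.

From mathcomp Require Import all_boot all_algebra zify.

Set Implicit Arguments.
Unset Strict Implicit.
Unset Printing Implicit Defensive.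

(* The label statistics of K_n, n = q p, do not depend on the vertex labeling f:
   for fixed u, f u + f v runs over n consecutive integers, i.e. over q full
   periods mod p, and so does f v + f v because 2 is invertible mod p.  Hence
   twice the number of edges labelled i is (n - 1) q C_i, where C_i counts the
   residues mod p with label i.  As C_0 + C_1 = p is odd, C_0 <> C_1, and the
   cordiality condition forces (q p - 1) q <= 2, i.e. q = 1 and p = 3; for p = 3
   the counts C_0 = 2, C_1 = 1 give edge counts 2 and 1. *)

Import Num.Theory.

Definition legendre_label (p s : nat) : nat :=
  if p %| s then 0 else if legendre p s == Posz 1 then 1 else 0.

Lemma edge_labelE p n (f : 'I_n -> nat) u v :
  edge_label p f u v = legendre_label p (f u + f v).
Proof. by []. Qed.

Lemma legendre_label_mod p s : legendre_label p (s %% p) = legendre_label p s.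
Proof. by rewrite /legendre_label /legendre /qres /dvdn !modn_mod. Qed.

Definition label_count (p i : nat) : nat := \sum_(r < p) (legendre_label p r == i).

Lemma label_count01 p : label_count p 0 + label_count p 1 = p.
Proof.
rewrite -big_split /= -[RHS]card_ord -sum1_card.
by apply: eq_bigr => r _; rewrite /legendre_label; case: ifP => _ //; case: ifP.
Qed.

Lemma label_count_neq p : odd p -> label_count p 0 != label_count p 1.
Proof.
move=> p_odd; apply: contraTneq p_odd => eq01.
by rewrite -[in odd _](label_count01 p) eq01 addnn odd_double.
Qed.

Lemma label_count3 : label_count 3 0 = 2 /\ label_count 3 1 = 1.
Proof.
have res1 : qres 3 1.
  by apply/andP; split => //; apply/existsP; exists (Ordinal (isT : 1 < 3)).
have nres2 : ~~ qres 3 2.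
  by apply/andP => -[_ /existsP [[[|[|[|x]]] x_lt]]].
rewrite /label_count !big_ord_recr !big_ord0 /=.
by rewrite /legendre_label /legendre (negbTE nres2) res1.
Qed.

Lemma sum_mod_period (G : nat -> nat) p q :
  \sum_(k < q * p) G (k %% p) = q * \sum_(r < p) G r.
Proof.
elim: q => [|q IHq]; first by rewrite big_ord0.
rewrite mulSn big_split_ord /= mulSn -IHq; congr (_ + _).
  by apply: eq_bigr => r _; rewrite modn_small.
by apply: eq_bigr => k _; rewrite modnDl.
Qed.

Lemma eqn_mod_affine_inj p c d a b : coprime p d -> a < p -> b < p ->
  c + d * a = c + d * b %[mod p] -> a = b.
Proof.
move=> cop_pd; wlog le_ba : a b / b <= a.
  by move=> W a_lt b_lt; case: (leqP b a) => [|/ltnW] le; [apply: W | move=> /esym/W->].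
move=> a_lt _ /eqP; rewrite eqn_modDl eqn_mod_dvd ?leq_mul2l ?le_ba ?orbT //.
rewrite -mulnBr Gauss_dvdr // /dvdn modn_small => [/eqP|]; lia.
Qed.

Lemma sum_affine_mod (G : nat -> nat) p c d : 0 < p -> coprime p d ->
  \sum_(r < p) G ((c + d * r) %% p) = \sum_(r < p) G r.
Proof.
move=> p_gt0 cop_pd.
pose h (r : 'I_p) : 'I_p := Ordinal (ltn_pmod (c + d * r) p_gt0).
have h_inj : injective h.
  move=> a b /(congr1 val) /= eq_ab; apply: val_inj.
  exact: eqn_mod_affine_inj cop_pd (ltn_ord a) (ltn_ord b) eq_ab.
by rewrite [RHS](reindex_inj h_inj).
Qed.

Lemma sum_periodic_affine (G : nat -> nat) p q c d : 0 < p -> coprime p d ->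
  (forall s, G (s %% p) = G s) ->
  \sum_(k < q * p) G (c + d * k) = q * \sum_(r < p) G r.
Proof.
move=> p_gt0 cop_pd G_per.
rewrite -(sum_affine_mod G c p_gt0 cop_pd).
rewrite -(sum_mod_period (fun r => G ((c + d * r) %% p))).
by apply: eq_bigr => k _; rewrite -modnDmr modnMmr modnDmr G_per.
Qed.

Lemma sum_vertex_labeling n (f : 'I_n -> nat) (G : nat -> nat) : vertex_labeling f ->
  \sum_(v < n) G (f v) = \sum_(k < n) G k.+1.
Proof.
case=> f_inj f_range.
have lt_pred v : (f v).-1 < n by have := f_range v; lia.
pose g v : 'I_n := Ordinal (lt_pred v).
have g_inj : injective g.
  move=> a b /(congr1 val) /= eq_ab; apply: f_inj.
  by have := f_range a; have := f_range b; lia.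
rewrite [RHS](reindex_inj g_inj); apply: eq_bigr => v _ /=.
by have := f_range v; case: (f v).
Qed.

Lemma sum_symmetric_pairs n (F : 'I_n -> 'I_n -> nat) : (forall u v, F u v = F v u) ->
  \sum_(u < n) \sum_(v < n) F u v =
  \sum_(u < n) F u u + 2 * \sum_(u < n) \sum_(v < n | u < v) F u v.
Proof.
move=> F_sym.
have split_row u : \sum_(v < n) F u v =
    F u u + (\sum_(v < n | u < v) F u v + \sum_(v < n | v < u) F u v).
  rewrite (bigD1 u) //= (bigID (fun v : 'I_n => u < v)) /=; congr (_ + (_ + _)).
    by apply: eq_bigl => v; rewrite -val_eqE /= neq_ltn; case: ltngtP.
  by apply: eq_bigl => v; rewrite -val_eqE /= neq_ltn; case: ltngtP.
rewrite (eq_bigr _ (fun u _ => split_row u)) !big_split /= mul2n -addnn.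
congr (_ + (_ + _)); rewrite (exchange_big_dep (fun _ => true)) //=.
by apply: eq_bigr => u _; apply: eq_bigr => v _; apply: F_sym.
Qed.

Lemma n_edges_labelE n (e : rel 'I_n) p f i :
  n_edges_label e p f i =
  \sum_(u < n) \sum_(v < n | u < v) (e u v && (edge_label p f u v == i)).
Proof.
rewrite /n_edges_label -sum1dep_card pair_big_dep /=.
by rewrite big_mkcond [RHS]big_mkcond; apply: eq_bigr => -[u v] _ /=; case: (u < v).
Qed.

Section CompleteGraph.

Variables (p q : nat).
Hypothesis p_odd : odd p.

Let n := q * p.
Let p_gt0 : 0 < p. Proof. by case: p p_odd. Qed.

Let label_indicator i s : nat := legendre_label p s == i.

Let label_indicator_mod i s : label_indicator i (s %% p) = label_indicator i s.
Proof. by rewrite /label_indicator legendre_label_mod. Qed.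

Lemma sum_label_row i s :
  \sum_(k < n) label_indicator i (s + k.+1) = q * label_count p i.
Proof.
rewrite -(sum_periodic_affine _ s.+1 p_gt0 (coprimen1 p) (label_indicator_mod i)).
by apply: eq_bigr => k _; rewrite mul1n addnS.
Qed.

Lemma sum_label_diagonal i :
  \sum_(k < n) label_indicator i (k.+1 + k.+1) = q * label_count p i.
Proof.
have cop_p2 : coprime p 2 by rewrite coprimen2.
rewrite -(sum_periodic_affine _ 2 p_gt0 cop_p2 (label_indicator_mod i)).
by apply: eq_bigr => k _; rewrite addnn -mul2n mulnSr addnC.
Qed.

Lemma complete_n_edges_label f i : vertex_labeling f ->
  2 * n_edges_label (complete_graph n) p f i = (n - 1) * q * label_count p i.
Proof.
move=> f_lab; rewrite -mulnA.
have ordered_pairs :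
    \sum_(u < n) \sum_(v < n) label_indicator i (f u + f v) = n * (q * label_count p i).
  rewrite (eq_bigr (fun _ => q * label_count p i)) ?sum_nat_const ?card_ord // => u _.
  by rewrite (sum_vertex_labeling (fun k => label_indicator i (f u + k))) // sum_label_row.
have diagonal : \sum_(u < n) label_indicator i (f u + f u) = q * label_count p i.
  by rewrite (sum_vertex_labeling (fun k => label_indicator i (k + k))) // sum_label_diagonal.
rewrite sum_symmetric_pairs in ordered_pairs; last by move=> u v; rewrite addnC.
rewrite n_edges_labelE mulnBl mul1n -ordered_pairs diagonal addKn.
congr (2 * _); apply: eq_bigr => u _; apply: eq_bigr => v u_lt_v.
by rewrite edge_labelE /complete_graph neq_ltn u_lt_v.
Qed.

End CompleteGraph.

Lemma cordial_gap (a b m c0 c1 : nat) : 2 * a = m * c0 -> 2 * b = m * c1 ->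
  c0 != c1 -> (`|Posz a - Posz b| <= 1)%R -> m <= 2.
Proof.
wlog lt01 : a b c0 c1 / c0 < c1.
  move=> W Ea Eb; rewrite neq_ltn => /orP[lt01|lt10] gap.
    by apply: (W a b c0 c1); rewrite ?ltn_eqF.
  by apply: (W b a c1 c0); rewrite ?ltn_eqF // distrC.
move=> Ea Eb _; have : m * c0.+1 <= m * c1 by rewrite leq_mul2l lt01 orbT.
rewrite mulnS; lia.
Qed.

Lemma id_succ_vertex_labeling n : vertex_labeling (fun v : 'I_n => v.+1).
Proof. by split=> [u v [/val_inj] | v /=]. Qed.

Theorem corollary3p4 (p q : nat) :
  prime p -> odd p -> 0 < q ->
  (legendre_cordial (complete_graph (q * p)) p <-> (q = 1 /\ p = 3)).
Proof.
move=> p_prime p_odd q_gt0; split.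
  case=> f [f_lab gap].
  have [E0 E1] := (complete_n_edges_label p_odd 0 f_lab, complete_n_edges_label p_odd 1 f_lab).
  have := cordial_gap E0 E1 (label_count_neq p_odd) gap.
  have p_gt2 : 2 < p.
    by rewrite ltn_neqAle prime_gt1 // andbT; apply: contraTneq p_odd => <-.
  nia.
case=> -> ->; exists (fun v => v.+1); split; first exact: id_succ_vertex_labeling.
have [C0 C1] := label_count3.
have E0 := complete_n_edges_label (isT : odd 3) 0 (id_succ_vertex_labeling (1 * 3)).
have E1 := complete_n_edges_label (isT : odd 3) 1 (id_succ_vertex_labeling (1 * 3)).
rewrite C0 in E0; rewrite C1 in E1; lia.
Qed.
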